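(* Let $K\le N$ and for $\mathbf{X}\in\mathbb{R}^{N\times K}$ define $$\ell_{\mathrm{om}}(\mathbf{X})=K\|\mathbf{X}^{\mathrm T}\mathbf{X}\|_{\mathrm F}^2-\|\mathbf{X}\|_{\mathrm F}^4.$$ If $\mathbf{X}=\mathbf{U}\mathbf{S}\mathbf{V}^{\mathrm T}$ is a singular value decomposition of $\mathbf{X}$ with singular values $S_{1,1},\dots,S_{K,K}$, then $$\ell_{\mathrm{om}}(\mathbf{X})=K\sum_{k=1}^K S_{k,k}^4-\Big(\sum_{k=1}^K S_{k,k}^2\Big)^2.$$ Moreover, $\ell_{\mathrm{om}}(\mathbf{X})\ge0$ for all $\mathbf{X}$, and $\ell_{\mathrm{om}}(\mathbf{X})=0$ if and only if $\mathbf{X}^{\mathrm T}\mathbf{X}=\alpha\mathbf{I}_K$ for some $\alpha\ge0$ (i.e., the columns of $\mathbf{X}$ are pairwise orthogonal and of equal length). Furthermore, $\ell_{\mathrm{om}}$ has no spurious stationary points: $\nabla_{\mathbf{X}}\ell_{\mathrm{om}}(\mathbf{X})=\mathbf{0}$ holds only if $\mathbf{X}^{\mathrm T}\mathbf{X}=\alpha\mathbf{I}_K$ for some $\alpha\ge0$.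
   Context: $\|\cdot\|_{\mathrm F}$ denotes the Frobenius norm and $\mathbf{I}_K$ the $K\times K$ identity matrix. A spurious stationary point of a differentiable function whose zero set is $\mathcal{X}$ is a point outside $\mathcal{X}$ where the gradient vanishes. *)

From HB Require Import structures.
From mathcomp Require Import all_boot all_order all_algebra.
From mathcomp Require Import all_classical all_reals all_analysis.
Set Implicit Arguments. Unset Strict Implicit. Unset Printing Implicit Defensive.
Import Order.TTheory GRing.Theory Num.Theory.
Import numFieldNormedType.Exports.
Local Open Scope ring_scope.

Definition frob (R : realType) (m n : nat) (A : 'M[R]_(m, n)) : R :=
  Num.sqrt (\sum_(i < m) \sum_(j < n) A i j ^+ 2).

Definition l_om (R : realType) (N K : nat) (X : 'M[R]_(N, K)) : R :=
  K%:R * frob (X^T *m X) ^+ 2 - frob X ^+ 4.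

Definition is_svd (R : realType) (N K : nat) (X : 'M[R]_(N, K))
  (U : 'M[R]_N) (S : 'M[R]_(N, K)) (V : 'M[R]_K) : Prop :=
  [/\ U^T *m U = 1%:M, V^T *m V = 1%:M,
      (forall (i : 'I_N) (j : 'I_K), nat_of_ord i <> nat_of_ord j -> S i j = 0),
      (forall (i : 'I_N) (j : 'I_K), nat_of_ord i = nat_of_ord j -> 0 <= S i j)
    & X = U *m S *m V^T].

Definition grad_zero (R : realType) (N K : nat) (f : 'M[R]_(N, K) -> R)
  (X : 'M[R]_(N, K)) : Prop :=
  forall (i : 'I_N) (j : 'I_K),
    is_derive (0 : R) (1 : R) (fun t : R => f (X + t *: delta_mx i j)) 0.

From HB Require Import structures.
From mathcomp Require Import all_boot all_order all_algebra.
From mathcomp Require Import all_classical all_reals all_analysis.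
From mathcomp Require Import ring.
Set Implicit Arguments. Unset Strict Implicit. Unset Printing Implicit Defensive.
Import Order.TTheory GRing.Theory Num.Theory.
Import numFieldNormedType.Exports.
Local Open Scope ring_scope.

(* With G := X^T X one has l_om X = K tr(G^2) - (tr G)^2, and for K > 0 this
   equals K ||G - (tr G / K) I||_F^2, which gives both the sign of l_om and its
   zero set.  Conjugating G by the orthogonal factor of an SVD leaves this
   quantity unchanged, which reduces it to the diagonal S^T S.  The gradient of
   l_om is 4 (K X G - tr(G) X); if it vanishes, multiplying by X^T and taking
   traces gives K tr(G^2) = (tr G)^2, i.e. l_om X = 0. *)

Section TraceGap.
Variable R : comPzRingType.

Definition tr_gap n (A : 'M[R]_n) : R := n%:R * \tr (A *m A) - \tr A ^+ 2.

Lemma mxtrace_mul_trmx m n (A : 'M[R]_(m, n)) :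
  \tr (A *m A^T) = \sum_i \sum_j A i j ^+ 2.
Proof.
by apply: eq_bigr => i _; rewrite mxE; apply: eq_bigr => j _; rewrite mxE expr2.
Qed.

Lemma mxtrace_mul_delta m n (A : 'M[R]_(m, n)) i j :
  \tr (A *m delta_mx j i) = A i j.
Proof.
rewrite /mxtrace (bigD1 i) //= big1 => [|k ki]; rewrite mxE.
  rewrite (bigD1 j) //= big1 ?addr0 => [|l lj]; rewrite !mxE ?eqxx ?mulr1 //.
  by rewrite (negPf lj) mulr0.
by rewrite big1 // => l _; rewrite mxE (negPf ki) andbF mulr0.
Qed.

Lemma sym_subr_scalar n (A : 'M[R]_n) a : A^T = A -> (A - a%:M)^T = A - a%:M.
Proof. by move=> AT; rewrite linearB /= AT tr_scalar_mx. Qed.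

Lemma tr_gap_conj n (V A : 'M[R]_n) :
  V^T *m V = 1%:M -> tr_gap (V *m A *m V^T) = tr_gap A.
Proof.
move=> VtV; have tr_conj (B : 'M[R]_n) : \tr (V *m B *m V^T) = \tr B.
  by rewrite mxtrace_mulC mulmxA VtV mul1mx.
have sqr_conj : (V *m A *m V^T) *m (V *m A *m V^T) = V *m (A *m A) *m V^T.
  by rewrite !mulmxA -[V *m A *m V^T *m V]mulmxA VtV mulmx1.
by rewrite /tr_gap sqr_conj !tr_conj.
Qed.

Lemma tr_gap_diag n (d : 'rV[R]_n) :
  tr_gap (diag_mx d) = n%:R * \sum_j d 0 j ^+ 2 - (\sum_j d 0 j) ^+ 2.
Proof.
rewrite /tr_gap mulmx_diag !mxtrace_diag.
by congr (_ * _ - _); apply: eq_bigr => j _; rewrite mxE expr2.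
Qed.

Lemma tr_gap_scalar n (a : R) : tr_gap (a%:M : 'M[R]_n) = 0.
Proof.
rewrite /tr_gap -scalar_mxM -[(a * a)%:M]scalemx1 -[a%:M]scalemx1.
by rewrite !mxtraceZ mxtrace1; ring.
Qed.

Lemma tr_gap_gram_eq0 m n (X : 'M[R]_(m, n)) :
  n%:R *: (X *m (X^T *m X)) = \tr (X^T *m X) *: X -> tr_gap (X^T *m X) = 0.
Proof.
move=> /(congr1 (fun Y => \tr (X^T *m Y))).
by rewrite /tr_gap -!scalemxAr !mxtraceZ !mulmxA expr2 => ->; rewrite subrr.
Qed.

End TraceGap.

Section TraceGapSign.
Variable R : realFieldType.

Lemma mxtrace_sqr_sym n (A : 'M[R]_n) :
  A^T = A -> \tr (A *m A) = \sum_i \sum_j A i j ^+ 2.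
Proof. by move=> AT; rewrite -{2}AT mxtrace_mul_trmx. Qed.

Lemma mxtrace_sqr_sym_eq0 n (A : 'M[R]_n) : A^T = A -> \tr (A *m A) = 0 -> A = 0.
Proof.
move=> /mxtrace_sqr_sym -> tr0; apply/matrixP => i j; rewrite mxE.
have row_ge0 k : 0 <= \sum_l A k l ^+ 2 by apply: sumr_ge0 => l _; apply: sqr_ge0.
apply/eqP; rewrite -sqrf_eq0; apply/eqP.
move/psumr_eq0P: tr0 => /(_ (fun k _ => row_ge0 k) i isT) /psumr_eq0P.
by apply=> // l _; apply: sqr_ge0.
Qed.

Lemma tr_gap_center n (A : 'M[R]_n) :
  let H := A - (\tr A / n%:R)%:M in tr_gap A = n%:R * \tr (H *m H).
Proof.
case: n A => [|n] A H.
  by rewrite /tr_gap /mxtrace !big_ord0 !mul0r expr2 mulr0 subr0.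
rewrite /H; set c := \tr A / _.
have cn : \tr A = c * n.+1%:R by rewrite mulfVK ?pnatr_eq0.
rewrite /tr_gap mulmxBl !mulmxBr mul_mx_scalar mul_scalar_mx -scalar_mxM.
by rewrite -[(c * c)%:M]scalemx1 !raddfB /= !mxtraceZ mxtrace1 cn; field.
Qed.

Lemma tr_gap_ge0 n (A : 'M[R]_n) : A^T = A -> 0 <= tr_gap A.
Proof.
move=> AT; rewrite tr_gap_center mxtrace_sqr_sym ?sym_subr_scalar //.
by apply: mulr_ge0 => //; do 2!(apply: sumr_ge0 => ? _); apply: sqr_ge0.
Qed.

Lemma tr_gap_eq0 n (A : 'M[R]_n) :
  A^T = A -> tr_gap A = 0 -> A = (\tr A / n%:R)%:M.
Proof.
case: n A => [|n] A AT; first by move=> _; apply/matrixP => -[].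
rewrite tr_gap_center => /eqP; rewrite mulf_eq0 pnatr_eq0 /= => /eqP.
by move=> /(mxtrace_sqr_sym_eq0 (sym_subr_scalar _ AT)) /eqP; rewrite subr_eq0 => /eqP.
Qed.

End TraceGapSign.

Section GramFrobenius.
Variables (R : realType) (N K : nat).

Lemma frob_sqr m n (A : 'M[R]_(m, n)) : frob A ^+ 2 = \tr (A *m A^T).
Proof.
rewrite /frob mxtrace_mul_trmx sqr_sqrtr //.
by do 2!(apply: sumr_ge0 => ? _); apply: sqr_ge0.
Qed.

Lemma trmx_gram m n (X : 'M[R]_(m, n)) : (X^T *m X)^T = X^T *m X.
Proof. by rewrite trmx_mul trmxK. Qed.

Lemma mxtrace_gram_ge0 m n (X : 'M[R]_(m, n)) : 0 <= \tr (X^T *m X).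
Proof. by rewrite mxtrace_mulC -frob_sqr sqr_ge0. Qed.

Lemma l_omE (X : 'M[R]_(N, K)) : l_om X = tr_gap (X^T *m X).
Proof.
rewrite /l_om /tr_gap -[4%N]/(2 * 2)%N exprM !frob_sqr trmx_gram.
by rewrite [\tr (X *m _)]mxtrace_mulC.
Qed.

Lemma l_om_ge0 (X : 'M[R]_(N, K)) : 0 <= l_om X.
Proof. by rewrite l_omE tr_gap_ge0 ?trmx_gram. Qed.

Lemma l_om_eq0 (X : 'M[R]_(N, K)) :
  l_om X = 0 <-> exists alpha : R, 0 <= alpha /\ X^T *m X = alpha%:M.
Proof.
rewrite l_omE; split=> [/(tr_gap_eq0 (trmx_gram X)) Gscalar|[alpha [_ ->]]].
  by exists (\tr (X^T *m X) / K%:R); rewrite divr_ge0 ?mxtrace_gram_ge0.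
exact: tr_gap_scalar.
Qed.

End GramFrobenius.

Lemma trmx_mul_rect_diag (R : comPzRingType) m n (hnm : (n <= m)%N)
    (S : 'M[R]_(m, n)) :
  (forall (i : 'I_m) (j : 'I_n), nat_of_ord i <> nat_of_ord j -> S i j = 0) ->
  S^T *m S = diag_mx (\row_k S (widen_ord hnm k) k ^+ 2).
Proof.
move=> S0; apply/matrixP => k l; rewrite !mxE (bigD1 (widen_ord hnm k)) //=.
rewrite big1 ?addr0 => [|p pk]; rewrite !mxE.
  have [<-|kl] := eqVneq k l; first by rewrite mulr1n expr2.
  by rewrite (S0 _ l) ?mulr0 // => kl'; move/eqP: kl; apply; apply: val_inj.
by rewrite (S0 p k) ?mul0r // => pk'; move/eqP: pk; apply; apply: val_inj.
Qed.

Section SVD.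
Variables (R : realType) (N K : nat) (hKN : (K <= N)%N).

Lemma gram_svd (X : 'M[R]_(N, K)) U S V :
  is_svd X U S V -> X^T *m X = V *m (S^T *m S) *m V^T.
Proof.
case=> UtU _ _ _ ->; rewrite !trmx_mul trmxK !mulmxA.
by rewrite -[V *m S^T *m U^T *m U]mulmxA UtU mulmx1.
Qed.

Lemma l_om_svd (X : 'M[R]_(N, K)) U S V : is_svd X U S V ->
  l_om X = K%:R * (\sum_(k < K) S (widen_ord hKN k) k ^+ 4)
           - (\sum_(k < K) S (widen_ord hKN k) k ^+ 2) ^+ 2.
Proof.
move=> svd; have [_ VtV S0 _ _] := svd.
rewrite l_omE (gram_svd svd) tr_gap_conj // (trmx_mul_rect_diag hKN S0).
by rewrite tr_gap_diag; congr (_ * _ - _ ^+ 2); apply: eq_bigr => k _; rewrite mxE -?exprM.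
Qed.

End SVD.

Section MatrixDerivative.
Variables (R : realType) (x v : R).

Definition is_derive_mx m n (A : R -> 'M[R]_(m, n)) (dA : 'M[R]_(m, n)) :=
  forall i j, is_derive x v (fun t => A t i j) (dA i j).

Lemma is_derive_mul (f g : R -> R) (df dg : R) :
  is_derive x v f df -> is_derive x v g dg ->
  is_derive x v (fun t => f t * g t) (f x * dg + g x * df).
Proof. by move=> hf hg; have := is_deriveM hf hg. Qed.

Lemma is_derive_sumr n (h : 'I_n -> R -> R) (dh : 'I_n -> R) :
  (forall k, is_derive x v (h k) (dh k)) ->
  is_derive x v (fun t => \sum_k h k t) (\sum_k dh k).
Proof.
move=> hh; have := is_derive_sum hh.
by congr (is_derive _ _ _ _); apply/funext => t; rewrite fct_sumE.
Qed.

Lemma is_derive_mx_line m n (X E : 'M[R]_(m, n)) :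
  is_derive_mx (fun t => X + t *: E) (v *: E).
Proof.
move=> i j; rewrite mxE.
have -> : (fun t => (X + t *: E) i j) = (fun t => X i j + t * E i j).
  by apply/funext => t; rewrite !mxE.
apply: is_derive_eq (is_deriveD (is_derive_cst (X i j) x v)
  (is_derive_mul (is_derive_id x v) (is_derive_cst (E i j) x v))) _.
by rewrite /= mulr0 !add0r mulrC.
Qed.

Lemma is_derive_mx_trmx m n (A : R -> 'M[R]_(m, n)) dA :
  is_derive_mx A dA -> is_derive_mx (fun t => (A t)^T) dA^T.
Proof.
move=> hA i j; rewrite mxE.
by have -> : (fun t => (A t)^T i j) = (fun t => A t j i) by apply/funext => t; rewrite mxE.
Qed.

Lemma is_derive_mx_mul m n p (A : R -> 'M[R]_(m, n)) (B : R -> 'M[R]_(n, p)) dA dB :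
  is_derive_mx A dA -> is_derive_mx B dB ->
  is_derive_mx (fun t => A t *m B t) (A x *m dB + dA *m B x).
Proof.
move=> hA hB i j; rewrite !mxE -big_split.
have -> : (fun t => (A t *m B t) i j) = (fun t => \sum_k A t i k * B t k j).
  by apply/funext => t; rewrite mxE.
apply: is_derive_sumr => k; apply: is_derive_eq (is_derive_mul (hA i k) (hB k j)) _.
by rewrite [_ * dA i k]mulrC.
Qed.

Lemma is_derive_mxtrace n (A : R -> 'M[R]_n) dA :
  is_derive_mx A dA -> is_derive x v (fun t => \tr (A t)) (\tr dA).
Proof. by move=> hA; apply: is_derive_sumr => k; apply: hA. Qed.

Lemma is_derive_tr_gap n (A : R -> 'M[R]_n) dA : is_derive_mx A dA ->
  is_derive x v (fun t => tr_gap (A t))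
    (2 * (n%:R * \tr (A x *m dA) - \tr (A x) * \tr dA)).
Proof.
move=> hA; have hAA := is_derive_mxtrace (is_derive_mx_mul hA hA).
have htr := is_derive_mxtrace hA.
have -> : (fun t => tr_gap (A t)) =
          (fun t => n%:R * \tr (A t *m A t) - \tr (A t) * \tr (A t)).
  by apply/funext => t; rewrite /tr_gap expr2.
apply: is_derive_eq (is_deriveB (is_derive_mul (is_derive_cst (n%:R : R) x v) hAA)
  (is_derive_mul htr htr)) _.
by rewrite mxtraceD [\tr (dA *m _)]mxtrace_mulC; ring.
Qed.

End MatrixDerivative.

Section Gradient.
Variables (R : realType) (N K : nat).

Lemma is_derive_l_om (X E : 'M[R]_(N, K)) :
  is_derive (0 : R) 1 (fun t => l_om (X + t *: E))
    (4 * \tr ((K%:R *: (X *m (X^T *m X)) - \tr (X^T *m X) *: X) *m E^T)).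
Proof.
have -> : (fun t => l_om (X + t *: E)) =
          (fun t => tr_gap ((X + t *: E)^T *m (X + t *: E))).
  by apply/funext => t; rewrite l_omE.
have hX := is_derive_mx_line (0 : R) 1 X E.
apply: is_derive_eq (is_derive_tr_gap (is_derive_mx_mul (is_derive_mx_trmx hX) hX)) _.
rewrite scale0r addr0 scale1r; set G := X^T *m X.
have trGEX : \tr (G *m (E^T *m X)) = \tr (X *m G *m E^T).
  by rewrite mulmxA mxtrace_mulC mulmxA.
have trGXE : \tr (G *m (X^T *m E)) = \tr (X *m G *m E^T).
  by rewrite -mxtrace_tr !trmx_mul trmxK -mulmxA mxtrace_mulC.
have trXE : \tr (E^T *m X) = \tr (X *m E^T) by rewrite mxtrace_mulC.
rewrite mulmxDr !mxtraceD trGEX trGXE -[X^T *m E]trmxK trmx_mul trmxK mxtrace_tr trXE.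
by rewrite mulmxBl raddfB /= -!scalemxAl !mxtraceZ mulmxA; ring.
Qed.

Lemma l_om_stationary (X : 'M[R]_(N, K)) : grad_zero (@l_om R N K) X ->
  K%:R *: (X *m (X^T *m X)) = \tr (X^T *m X) *: X.
Proof.
move=> gz; apply/eqP; rewrite -subr_eq0; apply/eqP/matrixP => i j; rewrite [RHS]mxE.
have := @derive_val _ _ _ _ _ _ _ (gz i j).
rewrite (@derive_val _ _ _ _ _ _ _ (is_derive_l_om X (delta_mx i j))).
rewrite trmx_delta mxtrace_mul_delta => /eqP.
by rewrite mulf_eq0 pnatr_eq0 /= => /eqP.
Qed.

End Gradient.

Theorem mainTheorem7 (R : realType) (N K : nat) (hKN : (K <= N)%N) :
  (forall (X : 'M[R]_(N, K)) (U : 'M[R]_N) (S : 'M[R]_(N, K)) (V : 'M[R]_K),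
     is_svd X U S V ->
     l_om X = K%:R * (\sum_(k < K) S (widen_ord hKN k) k ^+ 4)
              - (\sum_(k < K) S (widen_ord hKN k) k ^+ 2) ^+ 2)
  /\ (forall X : 'M[R]_(N, K), 0 <= l_om X)
  /\ (forall X : 'M[R]_(N, K),
        l_om X = 0 <-> exists alpha : R, 0 <= alpha /\ X^T *m X = alpha%:M)
  /\ (forall X : 'M[R]_(N, K),
        grad_zero (@l_om R N K) X ->
        exists alpha : R, 0 <= alpha /\ X^T *m X = alpha%:M).
Proof.
split; first exact: l_om_svd.
split; first exact: l_om_ge0.
split; first exact: l_om_eq0.
by move=> X /l_om_stationary /tr_gap_gram_eq0; rewrite -l_omE => /l_om_eq0.
Qed.
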